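(* For every $n\ge1$, $$R^*_n=\inf_{\hat H}\ \sup_{\mu\in\mathbb{H}(\mathbb{X})}\mathbb{E}_{X_1,\dots,X_n\sim\mu^n}\Big[\big(\hat H(X_1,\dots,X_n)-H(\mu)\big)^2\Big]=\infty,$$ where the infimum is over all measurable functions $\hat H:\mathbb{X}^n\to\mathbb{R}$.
   Context: $\mathbb{X}$ is a countably infinite set; for a probability $\mu$ on $\mathbb{X}$, $f_\mu(x)=\mu(\{x\})$, $A_\mu=\{x:f_\mu(x)>0\}$, and $H(\mu)=-\sum_{x\in A_\mu}f_\mu(x)\log f_\mu(x)$. $\mathbb{H}(\mathbb{X})$ is the set of probability measures on $\mathbb{X}$ with $H(\mu)<\infty$. $\mu^n$ denotes the $n$-fold product measure (i.i.d. sample of size $n$). *)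

From Stdlib Require Import Reals List.
Open Scope R_scope.

Definition is_pmf {X : Type} (e : nat -> X) (f : X -> R) : Prop :=
  (forall x, 0 <= f x) /\ infinite_sum (fun k => f (e k)) 1.

Definition ent_term (p : R) : R := if Rlt_dec 0 p then - (p * ln p) else 0.

(* H(mu) = h, and in particular H(mu) < infinity. *)
Definition has_entropy {X : Type} (e : nat -> X) (f : X -> R) (h : R) : Prop :=
  infinite_sum (fun k => ent_term (f (e k))) h.

Definition sample_prob {X : Type} (f : X -> R) (s : list X) : R :=
  fold_right (fun x acc => f x * acc) 1 s.

(* finite partial sum of the (nonnegative) expectation series
   sum_s mu^n(s) (Hhat s - h)^2 over a finite list L of samples *)
Definition partial_risk {X : Type} (Hhat : list X -> R) (f : X -> R) (h : R)
  (L : list (list X)) : R :=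
  fold_right (fun s acc => sample_prob f s * (Hhat s - h) ^ 2 + acc) 0 L.

(* Fix an estimator and look at the constant sample s0 = (x0, ..., x0).  The law
   putting mass 1/2 on x0 and 1/(2N) on each of N other points gives s0
   probability 2^-n whatever N is, while its entropy ln 2 + (ln N)/2 is
   unbounded in N.  Choosing N large, the single term 2^-n (Hhat s0 - H)^2 of
   the risk already exceeds any prescribed bound. *)

From Stdlib Require Import Reals List Lra Lia ClassicalEpsilon.
Import ListNotations.
Open Scope R_scope.

Lemma infinite_sum_ext (u v : nat -> R) (l : R) :
  (forall k, u k = v k) -> infinite_sum u l -> infinite_sum v l.
Proof.
  intros Huv Hu eps Heps.
  destruct (Hu eps Heps) as [K HK]; exists K; intros m Hm.
  rewrite <- (sum_eq u v) by auto; exact (HK m Hm).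
Qed.

Lemma infinite_sum_eventually_zero (u : nat -> R) (N : nat) :
  (forall k, (N < k)%nat -> u k = 0) -> infinite_sum u (sum_f_R0 u N).
Proof.
  intros Hu eps Heps; exists N; intros m Hm.
  replace (sum_f_R0 u m) with (sum_f_R0 u N).
  { unfold Rdist; rewrite Rminus_diag, Rabs_R0; lra. }
  induction Hm as [|m Hm IH]; [reflexivity|].
  simpl; rewrite Hu by lia; lra.
Qed.

Lemma ent_term0 : ent_term 0 = 0.
Proof. unfold ent_term; destruct (Rlt_dec 0 0); lra. Qed.

Lemma ent_term_pos (p : R) : 0 < p -> ent_term p = - (p * ln p).
Proof. intro Hp; unfold ent_term; destruct (Rlt_dec 0 p); [reflexivity | lra]. Qed.

Lemma sample_prob_repeat {X : Type} (f : X -> R) (x : X) (n : nat) :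
  sample_prob f (repeat x n) = f x ^ n.
Proof. induction n as [|n IH]; simpl; [reflexivity | now rewrite IH]. Qed.

Lemma partial_risk_singleton {X : Type} (Hhat : list X -> R) f h (s : list X) :
  partial_risk Hhat f h [s] = sample_prob f s * (Hhat s - h) ^ 2.
Proof. unfold partial_risk; simpl; ring. Qed.

Section Enumeration.

Variables (X : Type) (e : nat -> X).
Hypothesis e_inj : forall i j, e i = e j -> i = j.
Hypothesis e_surj : forall x, exists k, e k = x.

Definition enum_index (x : X) : nat :=
  proj1_sig (constructive_indefinite_description _ (e_surj x)).

Lemma enum_indexK (k : nat) : enum_index (e k) = k.
Proof.
  apply e_inj; unfold enum_index.
  now destruct constructive_indefinite_description.
Qed.

Lemma is_pmf_enum (g : nat -> R) :
  (forall k, 0 <= g k) -> infinite_sum g 1 ->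
  is_pmf e (fun x => g (enum_index x)).
Proof.
  intros Hg Hsum; split.
  - intro x; apply Hg.
  - apply (infinite_sum_ext g); [intro k; now rewrite enum_indexK | exact Hsum].
Qed.

Lemma has_entropy_enum (g : nat -> R) (h : R) :
  infinite_sum (fun k => ent_term (g k)) h ->
  has_entropy e (fun x => g (enum_index x)) h.
Proof.
  apply infinite_sum_ext; intro k; now rewrite enum_indexK.
Qed.

End Enumeration.

Definition spike_uniform (N k : nat) : R :=
  if Nat.eqb k 0 then / 2 else if Nat.leb k N then / (2 * INR N) else 0.

Lemma spike_uniform0 (N : nat) : spike_uniform N 0 = / 2.
Proof. reflexivity. Qed.

Lemma spike_uniform_out (N k : nat) : (N < k)%nat -> spike_uniform N k = 0.
Proof.
  intro Hk; unfold spike_uniform.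
  replace (Nat.eqb k 0) with false by (symmetry; apply Nat.eqb_neq; lia).
  now replace (Nat.leb k N) with false by (symmetry; apply Nat.leb_gt; lia).
Qed.

Lemma spike_uniform_ge0 (N k : nat) : (0 < N)%nat -> 0 <= spike_uniform N k.
Proof.
  intro HN; apply lt_0_INR in HN; unfold spike_uniform.
  destruct (Nat.eqb k 0); [lra|].
  destruct (Nat.leb k N); [|lra].
  left; apply Rinv_0_lt_compat; lra.
Qed.

Lemma sum_spike_uniform (F : R -> R) (N m : nat) : (m <= N)%nat ->
  sum_f_R0 (fun k => F (spike_uniform N k)) m = F (/ 2) + INR m * F (/ (2 * INR N)).
Proof.
  induction m as [|m IH]; intro Hm; [simpl; rewrite spike_uniform0; lra|].
  rewrite tech5, IH by lia; unfold spike_uniform at 1; simpl Nat.eqb.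
  replace (Nat.leb (S m) N) with true by (symmetry; apply Nat.leb_le; lia).
  rewrite S_INR; lra.
Qed.

Lemma spike_uniform_sum (N : nat) : (0 < N)%nat -> infinite_sum (spike_uniform N) 1.
Proof.
  intro HN; apply lt_0_INR in HN.
  replace 1 with (sum_f_R0 (fun k => id (spike_uniform N k)) N).
  - apply infinite_sum_eventually_zero; intros k Hk; now apply spike_uniform_out.
  - rewrite sum_spike_uniform by lia; unfold id; field; lra.
Qed.

Lemma spike_uniform_entropy (N : nat) : (0 < N)%nat ->
  infinite_sum (fun k => ent_term (spike_uniform N k)) (ln 2 + ln (INR N) / 2).
Proof.
  intro HN; apply lt_0_INR in HN.
  replace (ln 2 + ln (INR N) / 2)
    with (sum_f_R0 (fun k => ent_term (spike_uniform N k)) N).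
  - apply infinite_sum_eventually_zero; intros k Hk.
    now rewrite spike_uniform_out, ent_term0.
  - rewrite sum_spike_uniform, !ent_term_pos by (auto; apply Rinv_0_lt_compat; lra).
    rewrite !ln_Rinv, ln_mult by lra; field; lra.
Qed.

Lemma square_dominates (p c M h : R) :
  0 < p -> Rabs c + Rabs M / p + 1 <= h -> M <= p * (c - h) ^ 2.
Proof.
  intros Hp Hh.
  assert (HMq : Rabs M = p * (Rabs M / p)) by (field; lra).
  assert (Hq : 0 <= Rabs M / p).
  { apply Rmult_le_pos; [apply Rabs_pos | left; apply Rinv_0_lt_compat; lra]. }
  set (q := Rabs M / p) in *; clearbody q.
  assert (Hd : q + 1 <= h - c) by (pose proof (Rle_abs c); lra).
  assert (Hsq : q <= (c - h) ^ 2) by nra.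
  apply Rle_trans with (p * q).
  - rewrite <- HMq; apply Rle_abs.
  - apply Rmult_le_compat_l; lra.
Qed.

Lemma ln_unbounded (T : R) : exists N : nat, (0 < N)%nat /\ T <= ln (INR N).
Proof.
  destruct (INR_unbounded (exp T)) as [N HN].
  pose proof (exp_pos T).
  assert (HN0 : 0 < INR N) by lra.
  exists N; split; [now apply INR_lt; simpl | ].
  rewrite <- (ln_exp T); left; apply ln_increasing; lra.
Qed.

Theorem mainTheorem10 :
  forall (X : Type) (e : nat -> X),
    (forall i j, e i = e j -> i = j) ->
    (forall x, exists k, e k = x) ->
    forall n : nat, (1 <= n)%nat ->
    forall (Hhat : list X -> R) (M : R),
      exists (f : X -> R) (h : R),
        is_pmf e f /\ has_entropy e f h /\
        exists L : list (list X),
          NoDup L /\ Forall (fun s => length s = n) L /\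
          M <= partial_risk Hhat f h L.
Proof.
  intros X e e_inj e_surj n _ Hhat M.
  set (s0 := repeat (e 0%nat) n).
  assert (Hp : 0 < (/ 2) ^ n) by (apply pow_lt; lra).
  destruct (ln_unbounded (2 * (Rabs (Hhat s0) + Rabs M / (/ 2) ^ n + 1)))
    as [N [HN HlnN]].
  exists (fun x => spike_uniform N (enum_index X e e_surj x)), (ln 2 + ln (INR N) / 2).
  split; [|split].
  - apply is_pmf_enum; auto using spike_uniform_ge0, spike_uniform_sum.
  - apply has_entropy_enum; auto using spike_uniform_entropy.
  - exists [s0]; split; [|split].
    + repeat constructor; intros [].
    + repeat constructor; apply repeat_length.
    + rewrite partial_risk_singleton; unfold s0 in *.
      rewrite sample_prob_repeat, (enum_indexK X e e_inj), spike_uniform0.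
      apply square_dominates; [exact Hp|].
      pose proof (ln_lt_2); lra.
Qed.
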